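(* Consider the system $x(k+1)=Ax(k)+Bu(k)+w(k)$ in closed loop with the control scheme described in the context (Algorithm ATCS), suppose that $\mathbb{P}_0(x(0),\{0\})$ is feasible, and let $\gamma_z=\gamma_v=0$ (so that the cost is $J_k=N_k$), with $\lambda=1$ used in the algorithm. Then, for any disturbance realization with $w(k)\in\mathcal{W}$ for all $k$, the problems $\mathbb{P}_k(x(k),\mathcal{Z}_{f,k})$, with $\mathcal{Z}_{f,k}$ selected according to the algorithm (and with the additional constraint $N_k\le N^*_{k-1}-1$ whenever the second branch is taken), are feasible for all $k=1,2,\ldots$ reached by the algorithm, and the optimal horizon length decreases by at least $1$ at each step, i.e. $N_k^*\le N_{k-1}^*-1$.
   Context: System: $x(k+1)=Ax(k)+Bu(k)+w(k)$ with $x(k)\in\mathbb{R}^n$, $u(k)\in\mathbb{R}^m$, disturbance $w(k)\in\mathcal{W}$; state/input constraints $x(k)\in\mathcal{X}(k)$, $u(k)\in\mathcal{U}(k)$, where $\mathcal{X}(k),\mathcal{U}(k),\mathcal{W}$ are convex sets. A reference trajectory $r(k)\in\mathbb{R}^n$ is given. $K\in\mathbb{R}^{m\times n}$ is such that $A_K=A+BK$ is Schur. $\mathcal{A}\oplus\mathcal{B}=\{a+b: a\in\mathcal{A},b\in\mathcal{B}\}$, $\mathcal{A}\ominus\mathcal{B}=\{a: \{a\}\oplus\mathcal{B}\subseteq\mathcal{A}\}$. Define $\mathcal{S}(0)=\{0\}$ and $\mathcal{S}(j)=\bigoplus_{i=0}^{j-1}A_K^i\mathcal{W}$ for $j\ge1$;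 tightened sets $\mathcal{Z}_k(j)=\mathcal{X}(k+j)\ominus\mathcal{S}(j)$, $\mathcal{V}_k(j)=\mathcal{U}(k+j)\ominus K\mathcal{S}(j)$. $\|\cdot\|$ is a fixed vector norm. Problem $\mathbb{P}_k(x(k),\mathcal{Z}_f)$, for a convex set $\mathcal{Z}_f$: minimize over $N_k\in\{1,2,\ldots\}$, $v_k(0),\ldots,v_k(N_k-1)$, $z_k(0),\ldots,z_k(N_k)$ the cost $J_k=N_k+\gamma_z\sum_{j=0}^{N_k}\|z_k(j)-r(k+j)\|+\gamma_v\sum_{j=0}^{N_k-1}\|v_k(j)\|$ subject to $z_k(0)=x(k)$, $z_k(j+1)=Az_k(j)+Bv_k(j)$, $z_k(j)\in\mathcal{Z}_k(j)$ for $j=1,\ldots,N_k-1$, $v_k(j)\in\mathcal{V}_k(j)$ for $j=0,\ldots,N_k-1$, and $z_k(N_k)\in\{r(k+N_k)\}\oplus\mathcal{Z}_f$. Algorithm ATCS (parameter $\lambda$): at $k=0$ solve $\mathbb{P}_0(x(0),\{0\})$, obtaining $(J_0^*,N_0^*,v_0^*,z_0^* )$; set $\mathcal{Z}_{f,0}=\{0\}$, $\bar N=N_0^*$, apply $u(0)=v_0^*(0)$. Then, while $N^*_{k}>1$, increment $k$ and: solve $\mathbb{P}_k(x(k),\{0\})$ with optimal cost $\tilde J_k^*$ ($\tilde J_k^*=\infty$ if infeasible). If $\tilde J_k^*>J^*_{k-1}-\lambda$, set $\mathcal{Z}_{f,k}=\mathcal{Z}_{f,k-1}\oplus A_K^{N^*_{k-1}-1}\mathcal{W}$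 and solve $\mathbb{P}_k(x(k),\mathcal{Z}_{f,k})$ with the additional constraint $N_k\le N^*_{k-1}-1$, letting its solution be $(J_k^*,N_k^*,v_k^*,z_k^* )$; otherwise let $(J_k^*,N_k^*,v_k^*,z_k^* )$ be the solution of $\mathbb{P}_k(x(k),\{0\})$, set $\mathcal{Z}_{f,k}=\{0\}$ and $\bar N=N_k^*$. Apply $u(k)=v_k^*(0)$, so $x(k+1)=Ax(k)+Bu(k)+w(k)$ with $w(k)\in\mathcal{W}$ arbitrary. Upon termination, return $\bar N$. *)

From mathcomp Require Import all_boot all_order all_algebra.
From mathcomp Require Import all_classical all_reals.
From mathcomp Require Import ereal.
From mathcomp.real_closed Require Import complex.
Set Implicit Arguments. Unset Strict Implicit. Unset Printing Implicit Defensive.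
Import Order.TTheory GRing.Theory Num.Theory.
Local Open Scope classical_set_scope.
Local Open Scope ring_scope.

Section ATCS.
Variable R : realType.

Definition schur n (M : 'M[R]_n) : Prop :=
  forall lam : R[i],
    root (char_poly (map_mx (fun x : R => Complex x 0) M)) lam -> `|lam| < 1.

Definition convex_set_mx p q (S : set 'M[R]_(p, q)) : Prop :=
  forall x y t, S x -> S y -> 0 <= t <= 1 -> S (t *: x + (1 - t) *: y).

Definition is_vnorm p (nu : 'cV[R]_p -> R) : Prop :=
  [/\ forall x, 0 <= nu x,
      forall x, nu x = 0 -> x = 0,
      forall (a : R) x, nu (a *: x) = `|a| * nu x
    & forall x y, nu (x + y) <= nu x + nu y].

Definition msum p (S T : set 'cV[R]_p) : set 'cV[R]_p :=
  [set a + b | a in S & b in T].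
Definition pdiff p (S T : set 'cV[R]_p) : set 'cV[R]_p :=
  [set a | forall b, T b -> S (a + b)].
Definition mx_image p q (M : 'M[R]_(p, q)) (S : set 'cV[R]_q) : set 'cV[R]_p :=
  [set M *m s | s in S].

Variables (n m : nat) (A : 'M[R]_n) (B : 'M[R]_(n, m)) (K : 'M[R]_(m, n)).
Variables (X : nat -> set 'cV[R]_n) (U : nat -> set 'cV[R]_m) (W : set 'cV[R]_n).
Variable r : nat -> 'cV[R]_n.
Variables (gz gv : R) (nz : 'cV[R]_n -> R) (nv : 'cV[R]_m -> R).

Definition AK : 'M[R]_n := A + B *m K.

Fixpoint Sset (j : nat) : set 'cV[R]_n :=
  match j with
  | 0 => [set 0]
  | j'.+1 => msum (Sset j') (mx_image (AK ^+ j') W)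
  end.

Definition Zset (k j : nat) : set 'cV[R]_n := pdiff (X (k + j)) (Sset j).
Definition Vset (k j : nat) : set 'cV[R]_m := pdiff (U (k + j)) (mx_image K (Sset j)).

Definition feas (k : nat) (x : 'cV[R]_n) (Zf : set 'cV[R]_n)
  (N : nat) (v : nat -> 'cV[R]_m) (z : nat -> 'cV[R]_n) : Prop :=
  (1 <= N)%N /\
  [/\ z 0%N = x,
      forall j, (j < N)%N -> z j.+1 = A *m z j + B *m v j,
      forall j, (1 <= j)%N -> (j <= N.-1)%N -> Zset k j (z j),
      forall j, (j < N)%N -> Vset k j (v j)
    & msum [set r (k + N)%N] Zf (z N)].

Definition cost (k N : nat) (v : nat -> 'cV[R]_m) (z : nat -> 'cV[R]_n) : R :=
  N%:R + gz * (\sum_(j < N.+1) nz (z j - r (k + j)%N))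
       + gv * (\sum_(j < N) nv (v j)).

Definition optimal (k : nat)
  (F : nat -> (nat -> 'cV[R]_m) -> (nat -> 'cV[R]_n) -> Prop) N v z : Prop :=
  F N v z /\ forall N' v' z', F N' v' z' -> cost k N v z <= cost k N' v' z'.

(* optimal value (+oo if infeasible) *)
Definition optval (k : nat)
  (F : nat -> (nat -> 'cV[R]_m) -> (nat -> 'cV[R]_n) -> Prop) : \bar R :=
  ereal_inf [set e | exists N v z, F N v z /\ e = (cost k N v z)%:E].

(* One execution of Algorithm ATCS (parameter lam) up to step T, with
   states x, disturbances w, chosen optimal solutions (Ns k, vs k, zs k)
   and terminal sets Zf k. *)
Definition atcs_run (lam : R) (T : nat) (x w : nat -> 'cV[R]_n)
  (Ns : nat -> nat) (vs : nat -> nat -> 'cV[R]_m) (zs : nat -> nat -> 'cV[R]_n)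
  (Zf : nat -> set 'cV[R]_n) : Prop :=
  [/\ optimal 0 (feas 0 (x 0%N) [set 0]) (Ns 0%N) (vs 0%N) (zs 0%N),
      Zf 0%N = [set 0]
    & forall k, (1 <= k <= T)%N ->
      [/\ (1 < Ns k.-1)%N,
          W (w k.-1),
          x k = A *m x k.-1 + B *m vs k.-1 0%N + w k.-1
        & let Jprev := cost k.-1 (Ns k.-1) (vs k.-1) (zs k.-1) in
          let Jtil := optval k (feas k (x k) [set 0]) in
          ((Jprev - lam)%:E < Jtil)%E /\
            Zf k = msum (Zf k.-1) (mx_image (AK ^+ (Ns k.-1).-1) W) /\
            optimal k (fun N v z => feas k (x k) (Zf k) N v z /\ (N <= (Ns k.-1).-1)%N)
                    (Ns k) (vs k) (zs k)
          \/
          ~ ((Jprev - lam)%:E < Jtil)%E /\ Zf k = [set 0] /\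
            optimal k (feas k (x k) [set 0]) (Ns k) (vs k) (zs k)]].

End ATCS.

From mathcomp Require Import all_boot all_order all_algebra.
From mathcomp Require Import all_classical all_reals.
From mathcomp Require Import ereal.
From mathcomp Require Import zify.
Set Implicit Arguments. Unset Strict Implicit. Unset Printing Implicit Defensive.
Import Order.TTheory GRing.Theory Num.Theory.
Local Open Scope classical_set_scope.
Local Open Scope ring_scope.

(* Shifting the optimal plan of step k by one step and correcting it with the
   feedback K applied to the propagated disturbance, z'(j) = z(j+1) + A_K^j w,
   gives a plan of horizon N-1 that is feasible at step k+1 for the terminal
   set enlarged by A_K^(N-1) W: the margin S(j+1) = S(j) (+) A_K^j W absorbs
   the correction.  Hence the problem selected in the first branch is always
   feasible.  With gamma_z = gamma_v = 0 the cost is the horizon itself, so in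
   the second branch the optimal horizon is at most N - lambda < N, and there
   the optimal value is finite, which means the problem is feasible. *)

Section SetArithmetic.
Variables (R : realType) (p q : nat).
Implicit Types (S T V : set 'cV[R]_p) (a b : 'cV[R]_p).

Lemma msum_in S T a b : S a -> T b -> msum S T (a + b).
Proof. by move=> Sa Tb; exists a => //; exists b. Qed.

Lemma mx_image_in (M : 'M[R]_(p, q)) (V : set 'cV[R]_q) v :
  V v -> mx_image M V (M *m v).
Proof. by exists v. Qed.

Lemma msum_addr S T V a b : msum S T a -> V b -> msum S (msum T V) (a + b).
Proof. by move=> [s Ss [t Tt <-]] Vb; rewrite -addrA; apply/msum_in/msum_in. Qed.

Lemma pdiff_translate S T V a b :
  (forall t, T t -> V (t + b)) -> pdiff S V a -> pdiff S T (a + b).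
Proof. by move=> TV Sa t Tt; rewrite -addrA (addrC b); apply/Sa/TV. Qed.

End SetArithmetic.

Section RecursiveFeasibility.
Variables (R : realType) (n m : nat).
Variables (A : 'M[R]_n) (B : 'M[R]_(n, m)) (K : 'M[R]_(m, n)).
Variables (X : nat -> set 'cV[R]_n) (U : nat -> set 'cV[R]_m) (W : set 'cV[R]_n).
Variable r : nat -> 'cV[R]_n.

Lemma Sset_addS j s w : Sset A B K W j s -> W w ->
  Sset A B K W j.+1 (s + AK A B K ^+ j *m w).
Proof. by move=> Ss Ww; apply: msum_in Ss (mx_image_in _ Ww). Qed.

Lemma AK_exprS_mul j (y : 'cV[R]_n) :
  AK A B K ^+ j.+1 *m y =
  A *m (AK A B K ^+ j *m y) + B *m (K *m (AK A B K ^+ j *m y)).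
Proof. by rewrite exprS -mulmxE -mulmxA /AK mulmxDl -mulmxA. Qed.

Lemma feas_shift k x0 Zf N v z w :
  feas A B K X U W r k x0 Zf N v z -> (1 < N)%N -> W w ->
  feas A B K X U W r k.+1 (A *m x0 + B *m v 0%N + w)
    (msum Zf (mx_image (AK A B K ^+ N.-1) W)) N.-1
    (fun j => v j.+1 + K *m (AK A B K ^+ j *m w))
    (fun j => z j.+1 + AK A B K ^+ j *m w).
Proof.
move=> [_ [z0 dyn zc vc term]] N_gt1 Ww.
split; first by lia.
split.
- by rewrite expr0 mul1mx dyn ?z0 //; lia.
- move=> j j_lt; rewrite dyn; last by lia.
  by rewrite AK_exprS_mul !mulmxDr addrACA.
- move=> j _ j_le; rewrite /Zset addSnnS.
  apply: pdiff_translate (zc j.+1 isT _); last by lia.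
  by move=> s Ss; apply: Sset_addS.
- move=> j j_lt; rewrite /Vset addSnnS.
  apply: pdiff_translate (vc j.+1 _); last by lia.
  by move=> _ [s Ss <-]; rewrite -mulmxDr; apply/mx_image_in/Sset_addS.
- rewrite prednK ?(ltnW N_gt1) // addSnnS prednK; last by lia.
  exact/msum_addr/mx_image_in.
Qed.

Section Run.
Variables (gz gv : R) (nz : 'cV[R]_n -> R) (nv : 'cV[R]_m -> R).
Variables (lam : R) (T : nat) (x w : nat -> 'cV[R]_n) (Ns : nat -> nat).
Variables (vs : nat -> nat -> 'cV[R]_m) (zs : nat -> nat -> 'cV[R]_n).
Variable Zf : nat -> set 'cV[R]_n.
Hypothesis run : atcs_run A B K X U W r gz gv nz nv lam T x w Ns vs zs Zf.

Lemma atcs_run_feas k : (k <= T)%N ->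
  feas A B K X U W r k (x k) (Zf k) (Ns k) (vs k) (zs k).
Proof.
case: run => [[feas0 _] Zf0 run_step]; case: k => [_ | k k_le].
  by rewrite Zf0.
by case: (run_step k.+1 k_le) => _ _ _ [[_ [_ [[]]]] | [_ [-> []]]].
Qed.

End Run.
End RecursiveFeasibility.

Section OptimalValue.
Variables (R : realType) (n m : nat) (r : nat -> 'cV[R]_n).
Variables (gz gv : R) (nz : 'cV[R]_n -> R) (nv : 'cV[R]_m -> R).
Variable F : nat -> (nat -> 'cV[R]_m) -> (nat -> 'cV[R]_n) -> Prop.

Lemma optimal_optval k N v z : optimal r gz gv nz nv k F N v z ->
  optval r gz gv nz nv k F = (cost r gz gv nz nv k N v z)%:E.
Proof.
move=> [FNvz Nvz_min]; apply/le_anti/andP; split.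
  by apply: ge_ereal_inf; exists (cost r gz gv nz nv k N v z)%:E => //; exists N, v, z.
apply: le_ereal_inf_tmp => _ [N' [v' [z' [FN' ->]]]].
by rewrite lee_fin; apply: Nvz_min.
Qed.

Lemma optval_le_feasible k (e : R) : (optval r gz gv nz nv k F <= e%:E)%E ->
  exists N v z, F N v z.
Proof.
move=> le_e.
have /ereal_inf_lt[_ [N [v [z [FNvz _]]]] _] :
    (optval r gz gv nz nv k F < (e + 1)%:E)%E.
  by apply: le_lt_trans le_e _; rewrite lte_fin ltrDl.
by exists N, v, z.
Qed.

End OptimalValue.

Lemma cost_horizon (R : realType) (n m : nat) (r : nat -> 'cV[R]_n)
  (nz : 'cV[R]_n -> R) (nv : 'cV[R]_m -> R) k N v z :
  cost r 0 0 nz nv k N v z = N%:R.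
Proof. by rewrite /cost !mul0r !addr0. Qed.

Lemma atcs_run_horizon_decr (R : realType) (n m : nat)
  (A : 'M[R]_n) (B : 'M[R]_(n, m)) (K : 'M[R]_(m, n))
  (X : nat -> set 'cV[R]_n) (U : nat -> set 'cV[R]_m) (W : set 'cV[R]_n)
  (r : nat -> 'cV[R]_n) (nz : 'cV[R]_n -> R) (nv : 'cV[R]_m -> R)
  (lam : R) T x w Ns vs zs Zf :
  0 < lam -> atcs_run A B K X U W r 0 0 nz nv lam T x w Ns vs zs Zf ->
  forall k, (1 <= k <= T)%N -> (Ns k <= (Ns k.-1).-1)%N.
Proof.
move=> lam_gt0 [_ _ run_step] k k_range.
case: (run_step k k_range) => _ _ _ [[_ [_ [[_ //]]]] | [not_lt [_ opt]]].
move: not_lt; rewrite (optimal_optval opt) !cost_horizon lte_fin => /negP.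
rewrite -leNgt => le_Nk.
have : ((Ns k)%:R < (Ns k.-1)%:R :> R) by apply: le_lt_trans le_Nk _; rewrite ltrBlDr ltrDl.
by rewrite ltr_nat; lia.
Qed.

Theorem corollary1 (R : realType) (n m : nat)
  (A : 'M[R]_n) (B : 'M[R]_(n, m)) (K : 'M[R]_(m, n))
  (X : nat -> set 'cV[R]_n) (U : nat -> set 'cV[R]_m) (W : set 'cV[R]_n)
  (r : nat -> 'cV[R]_n) (nz : 'cV[R]_n -> R) (nv : 'cV[R]_m -> R) :
  (forall k, convex_set_mx (X k)) ->
  (forall k, convex_set_mx (U k)) ->
  convex_set_mx W ->
  schur (AK A B K) ->
  is_vnorm nz -> is_vnorm nv ->
  forall (T : nat) (x w : nat -> 'cV[R]_n) (Ns : nat -> nat)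
         (vs : nat -> nat -> 'cV[R]_m) (zs : nat -> nat -> 'cV[R]_n)
         (Zf : nat -> set 'cV[R]_n),
  (* P_0(x(0), {0}) is feasible *)
  (exists N v z, feas A B K X U W r 0 (x 0%N) [set 0] N v z) ->
  (* an execution of ATCS with lambda = 1 and gamma_z = gamma_v = 0 up to step T *)
  atcs_run A B K X U W r 0 0 nz nv 1 T x w Ns vs zs Zf ->
  (* the optimal horizon decreases by at least one at each step *)
  (forall k, (1 <= k <= T)%N -> (Ns k <= (Ns k.-1).-1)%N) /\
  (* if the algorithm continues, the problem selected at step T+1 is feasible *)
  ((1 < Ns T)%N ->
   forall wT, W wT ->
   let x' := A *m x T + B *m vs T 0%N + wT in
   let Jprev := cost r 0 0 nz nv T (Ns T) (vs T) (zs T) in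
   let Jtil := optval r 0 0 nz nv T.+1 (feas A B K X U W r T.+1 x' [set 0]) in
   (((Jprev - 1)%:E < Jtil)%E ->
      exists N v z,
        feas A B K X U W r T.+1 x'
             (msum (Zf T) (mx_image (AK A B K ^+ (Ns T).-1) W)) N v z
        /\ (N <= (Ns T).-1)%N) /\
   (~ ((Jprev - 1)%:E < Jtil)%E ->
      exists N v z, feas A B K X U W r T.+1 x' [set 0] N v z)).
Proof.
move=> _ _ _ _ _ _ T x w Ns vs zs Zf _ run.
split; first exact: atcs_run_horizon_decr ltr01 run.
move=> NT_gt1 wT WwT x' Jprev Jtil; split=> [_ | /negP].
  do 3 eexists; split; last exact: leqnn.
  exact: feas_shift (atcs_run_feas run (leqnn T)) NT_gt1 WwT.
by rewrite -leNgt; apply: optval_le_feasible.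
Qed.
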